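(* Let $n \ge 2$, $V=[1:n]$. Let $A$ be a deterministic adaptive algorithm (in the learning model described in the context, with no restriction on intervention sizes) such that for every total ordering $\sigma$ of $V$, when the ground truth is $\vec{K}_n(\sigma)$, the sequence of interventions $\mathcal{I}$ designed by $A$ results in all edges of $K_n$ being oriented. Then there exists a total ordering $\sigma$ of $V$ such that the family $\mathcal{I}$ designed by $A$ on ground truth $\vec{K}_n(\sigma)$ is a separating system on $V$, i.e. for every pair of distinct $i,j \in V$ there exists $I \in \mathcal{I}$ containing exactly one of $i$ and $j$.
   Context: For a total ordering $\sigma$ of $V=[1:n]$, $\vec{K}_n(\sigma)$ is the DAG on the complete graph $K_n$ in which each edge $\{u,v\}$ is directed from the earlier to the later vertex in $\sigma$. Learning model: the learner maintains a partially directed graph, initially the undirected complete graph $K_n$ (the true DAG is unknown). Performing an intervention on a set $I \subseteq V$ does the following: (R0) every edge with exactly one endpoint in $I$ becomes oriented as in the true DAG; then the following Meek rules are applied repeatedly until no further edge can be oriented: (R1) orient $a-b$ as $a\to b$ if there is $c$ with $c\to a$ and $c,b$ non-adjacent; (R2) orient $a-b$ as $a\to b$ if there is $c$ with $a\to c$ and $c\to b$; (R3) orient $a-b$ as $a\to b$ if there are $c,d$ with $a-c$, $a-d$, $c\to b$, $d\to b$ and $c,d$ non-adjacent; (R4) orient $a-c$ as $a\to c$ if there are $b,d$ with $b\to c$, $a-d$, $a-b$, $d\to b$ and $c,d$ non-adjacent. A deterministic adaptive algorithm chooses the intervention $I_{m+1}$ as a deterministic function of the partially directed graph obtained after $I_1,\ldots,I_m$;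 $\mathcal{I}=\{I_1,I_2,\ldots\}$ is the resulting family of interventions. *)

From mathcomp Require Import all_boot all_fingroup.
Set Implicit Arguments. Unset Strict Implicit. Unset Printing Implicit Defensive.

Section Model.
Variable n : nat.

(* A partially directed graph on V = 'I_n whose skeleton is the complete
   graph K_n; it is represented by its set of oriented edges:
   (a,b) \in G  means  a -> b.  Unoriented skeleton edges are undirected. *)
Definition pdg := {set 'I_n * 'I_n}.

Definition adjK (u v : 'I_n) : bool := u != v.
Definition nonadj (u v : 'I_n) : bool := (u != v) && ~~ adjK u v.

Definition dirE (G : pdg) (u v : 'I_n) : bool := (u, v) \in G.
Definition undir (G : pdg) (u v : 'I_n) : bool :=
  [&& adjK u v, ~~ dirE G u v & ~~ dirE G v u].

(* Meek rules: each says that the undirected edge a - b may be oriented a -> b *)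
Definition R1 (G : pdg) (a b : 'I_n) : bool :=
  [exists c, dirE G c a && nonadj c b].
Definition R2 (G : pdg) (a b : 'I_n) : bool :=
  [exists c, dirE G a c && dirE G c b].
Definition R3 (G : pdg) (a b : 'I_n) : bool :=
  [exists c, exists d,
     [&& undir G a c, undir G a d, dirE G c b, dirE G d b & nonadj c d]].
(* R4: orient a - c as a -> c *)
Definition R4 (G : pdg) (a c : 'I_n) : bool :=
  [exists b, exists d,
     [&& dirE G b c, undir G a d, undir G a b, dirE G d b & nonadj c d]].

Definition meek_applicable (G : pdg) (a b : 'I_n) : bool :=
  undir G a b && [|| R1 G a b, R2 G a b, R3 G a b | R4 G a b].

Definition meek_step (G : pdg) : pdg :=
  if [pick p : 'I_n * 'I_n | meek_applicable G p.1 p.2] is Some p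
  then p |: G else G.

(* apply Meek rules repeatedly until none applies: every productive step
   adds a new pair of V x V, so n*n iterations reach the fixpoint. *)
Definition meek_closure (G : pdg) : pdg := iter (n * n) meek_step G.

(* total ordering sigma of V given as a rank bijection:
   u is earlier than v iff sigma u < sigma v *)
Definition before (sigma : 'S_n) (u v : 'I_n) : bool := (sigma u < sigma v)%N.

(* R0: orient, as in the true DAG K_n(sigma), every edge with exactly one
   endpoint in I *)
Definition R0 (sigma : 'S_n) (I : {set 'I_n}) (G : pdg) : pdg :=
  G :|: [set p : 'I_n * 'I_n |
          [&& adjK p.1 p.2, (p.1 \in I) != (p.2 \in I) & before sigma p.1 p.2]].

Definition intervene (sigma : 'S_n) (I : {set 'I_n}) (G : pdg) : pdg :=
  meek_closure (R0 sigma I G).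

(* state of the learner after k interventions chosen by the deterministic
   adaptive algorithm A on ground truth K_n(sigma); start: undirected K_n *)
Fixpoint learner_run (A : pdg -> {set 'I_n}) (sigma : 'S_n) (k : nat) : pdg :=
  if k is k'.+1 then intervene sigma (A (learner_run A sigma k')) (learner_run A sigma k')
  else set0.

Definition fully_oriented (G : pdg) : bool :=
  [forall u, forall v, adjK u v ==> (dirE G u v || dirE G v u)].

(* the interv_family of interventions designed by A on ground truth K_n(sigma):
   those performed while the graph is not yet fully oriented *)
Definition interv_family (A : pdg -> {set 'I_n}) (sigma : 'S_n) (I : {set 'I_n}) : Prop :=
  exists k, ~~ fully_oriented (learner_run A sigma k) /\ I = A (learner_run A sigma k).

Definition separating_system (F : {set 'I_n} -> Prop) : Prop :=
  forall i j : 'I_n, i != j -> exists I, F I /\ (i \in I) != (j \in I).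

End Model.

From mathcomp Require Import all_boot all_fingroup zify.
Set Implicit Arguments. Unset Strict Implicit. Unset Printing Implicit Defensive.

(* The adversary answers every intervention consistently with the
   lexicographic order of membership vectors, in which earlier interventions
   weigh more and members of an intervention come before non-members.  Then
   after I_1, ..., I_k the learner has oriented exactly the pairs separated by
   some I_j, following that order: this orientation is transitive, and K_n has
   no non-adjacent pairs, so no Meek rule ever fires.  These graphs do not
   depend on sigma and increase with k, hence stabilise, so one ordering sigma
   extends all of them; on ground truth K_n(sigma) full orientation then means
   that every pair has been separated. *)
Section InflationaryIteration.
Variables (T : finType) (F : {set T} -> {set T}) (X : {set T}).
Hypothesis F_infl : forall Y : {set T}, Y \subset F Y.

Lemma subset_iter_infl i j : i <= j -> iter i F X \subset iter j F X.
Proof.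
move/subnK <-; elim: (j - i) => //= d IHd.
exact: subset_trans IHd (F_infl _).
Qed.

Lemma iter_card_infl_fix : F (iter #|T| F X) = iter #|T| F X.
Proof.
suff /'exists_eqP[j /= e]: [exists j : 'I_#|T|.+1, iter j F X == iter j.+1 F X].
  by rewrite -(subnK (leq_ord j)) iterD iter_fix.
apply: contraT => /existsPn /(_ (Ordinal _)) /= neq_iter.
suff iter_big k : k <= #|T|.+1 -> k <= #|iter k F X|.
  by have := iter_big _ (leqnn _); rewrite ltnNge max_card.
elim: k => [|k IHk] k_lt //=; apply: (leq_ltn_trans (IHk (ltnW k_lt))).
by rewrite proper_card // properEneq F_infl neq_iter.
Qed.

Lemma iter_sub_iter_card k : iter k F X \subset iter #|T| F X.
Proof.
have [/subset_iter_infl //|/ltnW/subnK <-] := leqP k #|T|.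
by rewrite iterD iter_fix // iter_card_infl_fix.
Qed.

End InflationaryIteration.

Lemma ltn_double_addb (a c : nat) (b d : bool) :
  (a.*2 + b < c.*2 + d) = (a < c) || (a == c) && (b < d).
Proof. by case: b; case: d => /=; apply/idP/idP; lia. Qed.

Lemma eqn_double_addb (a c : nat) (b d : bool) :
  (a.*2 + b == c.*2 + d) = (a == c) && (b == d).
Proof. by case: b; case: d => /=; apply/idP/idP; lia. Qed.

Lemma exists_perm_sorting n (f : 'I_n -> nat) :
  exists sigma : 'S_n, forall u v, f u < f v -> sigma u < sigma v.
Proof.
pose key u := f u * n + u.
have key_lt u v : f u < f v -> key u < key v.
  by rewrite /key => lt_uv; have := ltn_ord u; nia.
have key_inj : injective key.
  move=> u v; rewrite /key => e; apply/val_inj => /=.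
  have [lt_uv|lt_vu|eq_uv] := ltngtP (f u) (f v).
  - by have := key_lt _ _ lt_uv; rewrite /key e ltnn.
  - by have := key_lt _ _ lt_vu; rewrite /key e ltnn.
  - by move: e; rewrite eq_uv; lia.
pose rank u := #|[set w | key w < key u]|.
have rank_lt u : rank u < n.
  rewrite -[X in _ < X]card_ord -cardsT; apply: proper_card.
  by rewrite properT; apply/negP => /eqP E; have := in_setT u; rewrite -E inE ltnn.
have rank_mono u v : key u < key v -> rank u < rank v.
  move=> lt_uv; apply: proper_card; apply/properP; split.
    by apply/subsetP => w; rewrite !inE => /ltn_trans; apply.
  by exists u; rewrite !inE ?lt_uv ?ltnn.
have rank_inj : injective (fun u => Ordinal (rank_lt u)).
  move=> u v [e]; apply: key_inj.
  by case: (ltngtP (key u) (key v)) => // /rank_mono; rewrite e ltnn.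
exists (perm rank_inj) => u v /key_lt lt_uv.
by rewrite !permE /=; apply: rank_mono.
Qed.

Section LexicographicOrientation.
Variable n : nat.
Implicit Types (s : seq {set 'I_n}) (X : {set 'I_n}) (G : pdg n) (u v : 'I_n).

Lemma meek_closure_transitive G :
  (forall a b c, dirE G a b -> dirE G b c -> dirE G a c) -> meek_closure G = G.
Proof.
move=> G_trans.
suff step_id : meek_step G = G by rewrite /meek_closure; elim: (n * n) => //= k ->.
rewrite /meek_step; case: pickP => // -[a b] /andP[/and3P[_ Nab _]] /=.
have nonadjF c d : nonadj c d = false by rewrite /nonadj /adjK andbN.
case/or4P => /existsP[c].
- by rewrite nonadjF andbF.
- by case/andP => /G_trans/[apply] Gab; rewrite Gab in Nab.
- by case/existsP => d; rewrite nonadjF !andbF.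
- by case/existsP => d; rewrite nonadjF !andbF.
Qed.

Definition orient_split G X : pdg n :=
  G :|: [set p | [&& undir G p.1 p.2, p.1 \in X & p.2 \notin X]].

Lemma R0_orient_split (sigma : 'S_n) X G :
  (forall u v, (u, v) \in orient_split G X -> before sigma u v) ->
  R0 sigma X G = orient_split G X.
Proof.
move=> sigma_ext.
have before_asym u v : (v, u) \in orient_split G X -> before sigma u v = false.
  by move/sigma_ext; rewrite /before => /ltnW; rewrite leqNgt => /negbTE.
apply/setP => -[u v]; rewrite /R0 /orient_split !inE /=.
case Guv: ((u, v) \in G) => //=; case Gvu: ((v, u) \in G).
  rewrite before_asym ?andbF; last by rewrite /orient_split !inE Gvu.
  by rewrite /undir /dirE Gvu !andbF.
have undir_uv : undir G u v = adjK u v by rewrite /undir /dirE Guv Gvu !andbT.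
case uX: (u \in X); case vX: (v \in X); rewrite ?andbF ?andbT //=.
- have adj_uv : adjK u v by apply: contraTneq uX => ->; rewrite vX.
  by rewrite undir_uv adj_uv sigma_ext // /orient_split !inE Guv undir_uv adj_uv uX vX.
- rewrite before_asym ?andbF // /orient_split !inE /= Gvu uX vX andbT.
  by rewrite /undir /dirE Guv Gvu !andbT /adjK; apply: contraTneq vX => ->; rewrite uX.
Qed.

Definition code s u : nat := foldl (fun c X => c.*2 + (u \notin X)) 0 s.

Lemma code_rcons s X u : code (rcons s X) u = (code s u).*2 + (u \notin X).
Proof. by rewrite /code foldl_rcons. Qed.

Lemma code_neq_sep s u v :
  code s u != code s v -> exists2 X, X \in s & (u \in X) != (v \in X).
Proof.
elim/last_ind: s => [|s X IHs]; first by rewrite eqxx.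
rewrite !code_rcons eqn_double_addb negb_and => /orP[/IHs[Y sY uvY]|uvX].
  by exists Y; rewrite // mem_rcons in_cons sY orbT.
by exists X; rewrite ?mem_rcons ?mem_head // -(inj_eq negb_inj).
Qed.

Definition lex_pdg s : pdg n := [set p | code s p.1 < code s p.2].

Lemma lex_pdg_trans s a b c :
  dirE (lex_pdg s) a b -> dirE (lex_pdg s) b c -> dirE (lex_pdg s) a c.
Proof. by rewrite /dirE !inE; apply: ltn_trans. Qed.

Lemma lex_pdg_rcons s X : lex_pdg (rcons s X) = orient_split (lex_pdg s) X.
Proof.
apply/setP => -[u v]; rewrite !inE /= !code_rcons ltn_double_addb.
case: ltnP => //= le_vu; rewrite /undir /dirE !inE /=.
rewrite -!leqNgt le_vu eqn_leq le_vu !andbT.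
case uX: (u \in X); case vX: (v \in X); rewrite /= ?andbF ?andbT //.
by have -> : adjK u v by apply: contraTneq uX => ->; rewrite vX.
Qed.

End LexicographicOrientation.

Section Adversary.
Variables (n : nat) (A : pdg n -> {set 'I_n}).

Fixpoint adv_interventions k : seq {set 'I_n} :=
  if k is k'.+1 then
    rcons (adv_interventions k') (A (lex_pdg (adv_interventions k')))
  else [::].

Lemma lex_pdg_nil : lex_pdg [::] = set0 :> pdg n.
Proof. by apply/setP => p; rewrite !inE. Qed.

Lemma lex_pdg_adv_interventions k :
  lex_pdg (adv_interventions k) = iter k (fun G => orient_split G (A G)) set0.
Proof. by elim: k => [|k /= <-]; rewrite ?lex_pdg_nil ?lex_pdg_rcons. Qed.

Lemma exists_perm_extending_adv :
  exists sigma : 'S_n, forall k u v,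
    (u, v) \in lex_pdg (adv_interventions k) -> before sigma u v.
Proof.
set N := #|{: 'I_n * 'I_n}|.
have [sigma sorted] := exists_perm_sorting (code (adv_interventions N)).
exists sigma => k u v uv; apply: sorted.
have sub_N : lex_pdg (adv_interventions k) \subset lex_pdg (adv_interventions N).
  by rewrite !lex_pdg_adv_interventions; apply: iter_sub_iter_card => G; apply: subsetUl.
by have := subsetP sub_N _ uv; rewrite inE.
Qed.

Lemma learner_run_adv (sigma : 'S_n) :
  (forall k u v, (u, v) \in lex_pdg (adv_interventions k) -> before sigma u v) ->
  forall k, learner_run A sigma k = lex_pdg (adv_interventions k).
Proof.
move=> sigma_ext; elim=> [|k IHk] /=; first by rewrite lex_pdg_nil.
rewrite IHk /intervene R0_orient_split -lex_pdg_rcons.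
  by apply: meek_closure_transitive; apply: lex_pdg_trans.
exact: (sigma_ext k.+1).
Qed.

Lemma mem_adv_interventions m X :
  X \in adv_interventions m -> exists2 k, k < m & X = A (lex_pdg (adv_interventions k)).
Proof.
elim: m => [//|m IHm] /=; rewrite mem_rcons in_cons => /orP[/eqP ->|/IHm[k lt_km ->]].
  by exists m.
by exists k => //; apply: ltnW.
Qed.

End Adversary.

Theorem theorem2 (n : nat) (A : pdg n -> {set 'I_n}) :
  (2 <= n)%N ->
  (forall sigma : 'S_n, exists m, fully_oriented (learner_run A sigma m)) ->
  exists sigma : 'S_n, separating_system (interv_family A sigma).
Proof.
move=> _ learns.
have [sigma sigma_ext] := exists_perm_extending_adv A.
have run := learner_run_adv sigma_ext.
have [m oriented_m min_m] := ex_minnP (learns sigma).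
exists sigma => i j neq_ij.
have : code (adv_interventions A m) i != code (adv_interventions A m) j.
  move: oriented_m; rewrite run => /forallP/(_ i)/forallP/(_ j).
  by rewrite /adjK neq_ij /dirE !inE neq_ltn.
case/code_neq_sep => X /mem_adv_interventions[k lt_km ->] sepX.
exists (A (lex_pdg (adv_interventions A k))); split=> //.
exists k; split; last by rewrite run.
by apply: contraTN lt_km => /min_m; rewrite -leqNgt.
Qed.
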